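(* Let $X$ be a topological space and $\mathcal A,\mathcal B\subseteq\wp(X)$. Then the games $G_1(\Omega_{C_{\mathcal A}(X),\mathbf 0},\Omega_{C_{\mathcal B}(X),\mathbf 0})$ and $G_1(\mathscr N_{C_{\mathcal A}(X)}(\mathbf 0),\neg\Omega_{C_{\mathcal B}(X),\mathbf 0})$ are dual.
   Context: $C_{\mathcal A}(X)$ is the set of continuous $f:X\to\mathbb R$ with the topology generated by the sets $[f;A,\varepsilon]=\{g:\sup_{x\in A}|f(x)-g(x)|<\varepsilon\}$, $A\in\mathcal A$, $\varepsilon>0$; similarly $C_{\mathcal B}(X)$ (same underlying set). $\mathbf 0$ is the zero function. For a space $Y$ and $y\in Y$, $\Omega_{Y,y}=\{S\subseteq Y:y\in\mathrm{cl}_Y(S)\}$ and $\mathscr N_Y(y)$ is the set of open neighbourhoods of $y$. In $G_1(\mathcal E,\mathcal C)$, at each inning $n\in\omega$ One plays $E_n\in\mathcal E$ and Two picks $x_n\in E_n$; Two wins iff $\{x_n:n\in\omega\}\in\mathcal C$; $\neg\mathcal C$ is the complement of $\mathcal C$. A strategy for One maps finite sequences of Two's moves to moves; predetermined if it depends only on the inning number. A strategy for Two maps finite sequences of One's moves to an element of the last one; Markov if it depends only on One's last move and the inning number. $G,H$ are dual if: One has a winning strategy in $G$ iff Two has one in $H$; One has one in $H$ iff Two has one in $G$; One has a winning predetermined strategy in $G$ iff Two has a winning Markov strategy in $H$; One has a winning predetermined strategy in $H$ iff Two has a winning Markov strategy in $G$. *)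

From mathcomp Require Import all_boot all_order all_algebra.
From mathcomp Require Import all_classical all_reals all_analysis.
From mathcomp Require Import Rstruct Rstruct_topology.
From Stdlib Require Import List Reals.
Set Implicit Arguments. Unset Strict Implicit. Unset Printing Implicit Defensive.
Import Order.TTheory GRing.Theory Num.Theory.
Local Open Scope classical_set_scope.
Local Open Scope ring_scope.

(* Open sets of the topology on T generated by the family [sb] (as a subbase):
   unions of finite intersections of members of [sb]
   (the empty intersection being the whole space). *)
Definition gen_open (T : Type) (sb : set (set T)) (U : set T) : Prop :=
  forall x, U x ->
    exists s : list (set T),
      (forall V, List.In V s -> sb V /\ V x) /\
      (forall y, (forall V, List.In V s -> V y) -> U y).

Definition gen_closure (T : Type) (sb : set (set T)) (S : set T) (y : T) : Prop :=
  forall U, gen_open sb U -> U y -> exists z, U z /\ S z.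

Definition OmegaAt (T : Type) (sb : set (set T)) (y : T) : set (set T) :=
  [set S | gen_closure sb S y].

Definition OpenNbhds (T : Type) (sb : set (set T)) (y : T) : set (set T) :=
  [set U | gen_open sb U /\ U y].

Definition CX (X : topologicalType) : Type :=
  {f : X -> R | continuous f}.

Definition CXfun (X : topologicalType) (f : CX X) : X -> R := proj1_sig f.

(* [f; A, eps] = { g : sup_{x in A} |f x - g x| < eps }, the sup taken in the
   extended reals (sup of the empty set is -oo). *)
Definition basic_nbhd (X : topologicalType) (f : CX X) (A : set X) (eps : R)
  : set (CX X) :=
  [set g | (ereal_sup [set (`|CXfun f x - CXfun g x|)%:E | x in A]
             < eps%:E)%E].

Definition CA_subbase (X : topologicalType) (calA : set (set X)) : set (set (CX X)) :=
  [set V | exists (f : CX X) (A : set X) (eps : R),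
             calA A /\ 0 < eps /\ V = basic_nbhd f A eps].

Definition zeroCX (X : topologicalType) : CX X :=
  exist (fun f : X -> R => continuous f) (fun _ : X => (0 : R)) (@cst_continuous X R (0 : R)).

Section Games.
Variable P : Type.

Definition OneStrategy (E : set (set P)) (sigma : list P -> set P) : Prop :=
  forall h, E (sigma h).

Definition plays_against (sigma : list P -> set P) (x : nat -> P) : Prop :=
  forall n, sigma (map x (iota 0 n)) (x n).

Definition One_wins_with (E C : set (set P)) (sigma : list P -> set P) : Prop :=
  OneStrategy E sigma /\
  forall x : nat -> P, plays_against sigma x -> ~ C (range x).

Definition One_has_winning_strategy (E C : set (set P)) : Prop :=
  exists sigma, One_wins_with E C sigma.

Definition One_wins_with_predetermined (E C : set (set P)) (sigma : nat -> set P)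
  : Prop :=
  (forall n, E (sigma n)) /\
  forall x : nat -> P, (forall n, sigma n (x n)) -> ~ C (range x).

Definition One_has_winning_predetermined_strategy (E C : set (set P)) : Prop :=
  exists sigma, One_wins_with_predetermined E C sigma.

(* Strategy for Two: given the earlier moves of One (h) and One's last move F,
   picks an element of F. *)
Definition TwoStrategy (E : set (set P)) (tau : list (set P) -> set P -> P) : Prop :=
  forall h F, E F -> F (tau h F).

Definition Two_wins_with (E C : set (set P)) (tau : list (set P) -> set P -> P)
  : Prop :=
  TwoStrategy E tau /\
  forall F : nat -> set P, (forall n, E (F n)) ->
    C (range (fun n => tau (map F (iota 0 n)) (F n))).

Definition Two_has_winning_strategy (E C : set (set P)) : Prop :=
  exists tau, Two_wins_with E C tau.

Definition Two_wins_with_Markov (E C : set (set P)) (tau : set P -> nat -> P)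
  : Prop :=
  (forall F n, E F -> F (tau F n)) /\
  forall F : nat -> set P, (forall n, E (F n)) ->
    C (range (fun n => tau (F n) n)).

Definition Two_has_winning_Markov_strategy (E C : set (set P)) : Prop :=
  exists tau, Two_wins_with_Markov E C tau.

Definition dual_games (E1 C1 E2 C2 : set (set P)) : Prop :=
  (One_has_winning_strategy E1 C1 <-> Two_has_winning_strategy E2 C2) /\
  (One_has_winning_strategy E2 C2 <-> Two_has_winning_strategy E1 C1) /\
  (One_has_winning_predetermined_strategy E1 C1 <->
     Two_has_winning_Markov_strategy E2 C2) /\
  (One_has_winning_predetermined_strategy E2 C2 <->
     Two_has_winning_Markov_strategy E1 C1).

End Games.

From mathcomp Require Import all_boot all_order all_algebra.
From mathcomp Require Import all_classical all_reals all_analysis.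
From mathcomp Require Import Rstruct Rstruct_topology.
From Stdlib Require List.
Set Implicit Arguments. Unset Strict Implicit.
Local Open Scope classical_set_scope.

(** A point y is in the closure of S iff S meets every open neighbourhood of
y, so the range of any selection from the neighbourhoods of y lies in
Omega_y; conversely, the range of a selection from Omega_y contains a
neighbourhood of y, for otherwise picking from each neighbourhood a point
outside that range gives a member of Omega_y whose selected point is both
inside and outside it. With these facts a player's winning strategy in one
game is translated into a winning strategy of the other player in the other
game: the translated strategy answers a move by a move of the simulated game,
replaying the whole simulated history at each inning, and the ranges of the
two plays coincide. *)

Lemma map_iotaS (T : Type) (x : nat -> T) n :
  List.map x (iota 0 n.+1) = rcons (List.map x (iota 0 n)) (x n).
Proof.
rewrite -addn1 iotaD /= add0n.
by elim: (iota 0 n) => //= k s ->.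
Qed.

Section Replay.
Variables (A B : Type) (next : list B -> A -> B).

Definition replay (h : list A) : list B :=
  foldl (fun acc a => rcons acc (next acc a)) [::] h.

Lemma replay_prefix (a : nat -> A) n :
  replay (List.map a (iota 0 n)) =
  List.map (fun k => next (replay (List.map a (iota 0 k))) (a k)) (iota 0 n).
Proof. by elim: n => [//|n IHn]; rewrite !map_iotaS /replay foldl_rcons -IHn. Qed.

End Replay.

Definition meets_all (P : Type) (E F : set (set P)) :=
  forall S U, E S -> F U -> S `&` U !=set0.

Definition selection_images_contain (P : Type) (F E : set (set P)) :=
  forall f : set P -> P, (forall U, F U -> U (f U)) ->
  exists2 S, E S & S `<=` f @` F.

Section Duality.
Variables (P : choiceType) (x0 : P).
Implicit Types (E F C : set (set P)) (f : set P -> P).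

Lemma meets_allC E F : meets_all E F -> meets_all F E.
Proof. by move=> EF U S FU ES; rewrite setIC; apply: EF. Qed.

Definition member_in_image E F f : set P :=
  xget setT [set S | E S /\ S `<=` f @` F].

Lemma member_in_imageP E F f : selection_images_contain F E ->
  (forall U, F U -> U (f U)) ->
  E (member_in_image E F f) /\ member_in_image E F f `<=` f @` F.
Proof.
move=> FE /FE [S ES SfF].
by apply: (@xgetPex _ setT [set S | E S /\ S `<=` f @` F]); exists S.
Qed.

Definition preimage_in F f (z : P) : set P := xget setT [set U | F U /\ f U = z].

Lemma preimage_inP F f z :
  (f @` F) z -> F (preimage_in F f z) /\ f (preimage_in F f z) = z.
Proof.
by move=> [U FU fU]; apply: (@xgetPex _ setT [set U | F U /\ f U = z]); exists U.
Qed.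

Lemma One_win_Two_win E F C : meets_all E F ->
  One_has_winning_strategy E C -> Two_has_winning_strategy F (~` C).
Proof.
move=> EF [sigma [sigmaE sigma_win]].
pose next acc U := xget x0 (U `&` sigma acc).
have nextP acc U : F U -> (U `&` sigma acc) (next acc U).
  by move=> FU; apply: xgetPex; rewrite setIC; apply: EF.
exists (fun h => next (replay next h)).
split=> [h U /(nextP (replay next h)) []//|G FG].
apply: sigma_win => n; rewrite -replay_prefix.
by have [] := nextP (replay next (List.map G (iota 0 n))) (G n) (FG n).
Qed.

Lemma One_predetermined_Two_Markov E F C : meets_all E F ->
  One_has_winning_predetermined_strategy E C ->
  Two_has_winning_Markov_strategy F (~` C).
Proof.
move=> EF [sigma [sigmaE sigma_win]].
pose tau U n := xget x0 (U `&` sigma n).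
have tauP U n : F U -> (U `&` sigma n) (tau U n).
  by move=> FU; apply: xgetPex; rewrite setIC; apply: EF.
exists tau; split=> [U n /(tauP U n) []//|G FG].
by apply: sigma_win => n; have [] := tauP (G n) n (FG n).
Qed.

Lemma Two_win_One_win E F D : selection_images_contain F E ->
  Two_has_winning_strategy F D -> One_has_winning_strategy E (~` D).
Proof.
move=> FE [tau [tauF tau_win]].
pose next acc z := preimage_in F (tau acc) z.
pose sigma h := member_in_image E F (tau (replay next h)).
have sigmaP h := member_in_imageP FE (tauF (replay next h)).
exists sigma; split=> [h|x x_plays]; first by have [] := sigmaP h.
pose G n := next (replay next (List.map x (iota 0 n))) (x n).
have GP n := preimage_inP (proj2 (sigmaP _) _ (x_plays n)).
suff -> : x = fun n => tau (List.map G (iota 0 n)) (G n).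
  by apply; apply: tau_win => n; have [] := GP n.
by apply: funext => n; rewrite -replay_prefix; have [] := GP n.
Qed.

Lemma Two_Markov_One_predetermined E F D : selection_images_contain F E ->
  Two_has_winning_Markov_strategy F D ->
  One_has_winning_predetermined_strategy E (~` D).
Proof.
move=> FE [tau [tauF tau_win]].
pose sigma n := member_in_image E F (tau^~ n).
have sigmaP n := member_in_imageP FE (fun U => tauF U n).
exists sigma; split=> [n|x x_plays]; first by have [] := sigmaP n.
pose G n := preimage_in F (tau^~ n) (x n).
have GP n := preimage_inP (proj2 (sigmaP n) _ (x_plays n)).
suff -> : x = fun n => tau (G n) n by apply; apply: tau_win => n; have [] := GP n.
by apply: funext => n; have [] := GP n.
Qed.

Lemma dual_games_of_reflection E F C : meets_all E F ->
  selection_images_contain F E -> selection_images_contain E F ->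
  dual_games E C F (~` C).
Proof.
move=> E_meets_F F_sel E_sel; have F_meets_E := meets_allC E_meets_F.
split; [split|split; [split|split; split]].
- exact: One_win_Two_win.
- by move/(Two_win_One_win F_sel); rewrite setCK.
- by move/(One_win_Two_win F_meets_E); rewrite setCK.
- exact: Two_win_One_win.
- exact: One_predetermined_Two_Markov.
- by move/(Two_Markov_One_predetermined F_sel); rewrite setCK.
- by move/(One_predetermined_Two_Markov F_meets_E); rewrite setCK.
- exact: Two_Markov_One_predetermined.
Qed.

End Duality.

Section NeighbourhoodsAndClosure.
Variables (T : Type) (sb : set (set T)) (y : T).

Lemma OmegaAt_meets_OpenNbhds : meets_all (OmegaAt sb y) (OpenNbhds sb y).
Proof. by move=> S U S_y [U_open Uy]; rewrite setIC; apply: S_y. Qed.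

Lemma OmegaAt_selection_image (f : set T -> T) :
  (forall U, OpenNbhds sb y U -> U (f U)) -> OmegaAt sb y (f @` OpenNbhds sb y).
Proof. by move=> fU W W_open Wy; exists (f W); split; [apply: fU | exists W]. Qed.

Lemma OpenNbhds_selection_images :
  selection_images_contain (OpenNbhds sb y) (OmegaAt sb y).
Proof.
by move=> f fU; exists (f @` OpenNbhds sb y); first exact: OmegaAt_selection_image.
Qed.

Lemma OmegaAt_selection_images :
  selection_images_contain (OmegaAt sb y) (OpenNbhds sb y).
Proof.
move=> f fS; apply: contrapT => no_nbhd.
have outside U : exists z, OpenNbhds sb y U -> U z /\ ~ (f @` OmegaAt sb y) z.
  have [NU|] := pselect (OpenNbhds sb y U); last by exists y.
  suff [z Uz nz] : exists2 z, U z & ~ (f @` OmegaAt sb y) z by exists z.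
  apply: contrapT => all_in; apply: no_nbhd; exists U => // z Uz.
  by apply: contrapT => nz; apply: all_in; exists z.
have [g gP] := choice outside.
have g_Omega := OmegaAt_selection_image (fun U NU => (gP U NU).1).
have [U NU gU] := fS _ g_Omega.
by apply: (gP U NU).2; rewrite gU; exists (g @` OpenNbhds sb y).
Qed.

End NeighbourhoodsAndClosure.

Theorem mainTheorem5 (X : topologicalType) (calA calB : set (set X)) :
  dual_games
    (OmegaAt (CA_subbase calA) (zeroCX X))
    (OmegaAt (CA_subbase calB) (zeroCX X))
    (OpenNbhds (CA_subbase calA) (zeroCX X))
    (~` OmegaAt (CA_subbase calB) (zeroCX X)).
Proof.
apply: (@dual_games_of_reflection {classic CX X} (zeroCX X)).
- exact: OmegaAt_meets_OpenNbhds.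
- exact: OpenNbhds_selection_images.
- exact: OmegaAt_selection_images.
Qed.
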